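(* Let $(G,X)$ be a self-similar group with $|X|\ge1$. Then the Boolean inverse monoid $\mathcal G_{\mathrm{tight}}(S^{=}_{G,X})^a$ has exactly one normalized invariant mean $\mu$, namely the one determined on cylinder sets by $\mu(C(\alpha))=|X|^{-|\alpha|}$ for $\alpha\in X^*$ (and extended additively to clopen subsets of $X^\omega$, each of which is a finite disjoint union of cylinders).
   Context: $X$ is a finite set, $X^*$ the finite words over $X$ (including the empty word), $|\alpha|$ the length of $\alpha$, $X^\omega$ the Cantor space of infinite words, $C(\alpha)=\{\alpha x:x\in X^\omega\}$. A self-similar group $(G,X)$: a faithful length-preserving action of a group $G$ on $X^*$ with, for each $g,x$, a unique $g|_x\in G$ such that $g\cdot(x\alpha)=(g\cdot x)(g|_x\cdot\alpha)$; restrictions extend to words and the action extends to $X^\omega$ by $g\cdot(x_1x_2\cdots)=(g\cdot x_1)(g|_{x_1}\cdot x_2)(g|_{x_1x_2}\cdot x_3)\cdots$. $S_{G,X}=\{(\alpha,g,\beta)\}\cup\{0\}$ with $(\alpha,g,\beta)^*=(\beta,g^{-1},\alpha)$ and product $(\alpha,g,\beta)(\gamma,h,\nu)$ equal to $(\alpha(g\cdot\gamma'),g|_{\gamma'}h,\nu)$ if $\gamma=\beta\gamma'$, $(\alpha,g(h^{-1}|_{\beta'})^{-1},\nu(h^{-1}\cdot\beta'))$ if $\beta=\gamma\beta'$, and $0$ otherwise. $S^{=}_{G,X}=\{(\alpha,g,\beta)\in S_{G,X}:|\alpha|=|\beta|\}\cup\{0\}$ is an inverse submonoid with idempotents $(\alpha,1,\alpha)$.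 Its tight groupoid $\mathcal G_{\mathrm{tight}}(S^{=}_{G,X})$ has unit space $X^\omega$ and consists of germs $[(\alpha,g,\beta),\beta x]$ with $d=\beta x$ and $r=\alpha(g\cdot x)$, where $[s,x]=[t,x]$ iff $se=te$ for some idempotent $e=(\delta,1,\delta)$ with $x\in C(\delta)$; its topology is generated by the sets $\{[s,y]:y\in U\}$, $U$ open in the domain of $s$. $\mathcal G_{\mathrm{tight}}(S^{=}_{G,X})^a$ is the Boolean inverse monoid of compact open bisections (under setwise product and inverse); its idempotents are the clopen subsets of $X^\omega$. A normalized invariant mean on a Boolean inverse monoid $S$ is $\mu:E(S)\to[0,\infty)$ with $\mu(1)=1$, $\mu(s^*s)=\mu(ss^* )$ for all $s$, and $\mu(e\vee f)=\mu(e)+\mu(f)$ when $ef=0$. *)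

From HB Require Import structures.
From mathcomp Require Import all_boot.
From Stdlib Require Import Reals.

Set Implicit Arguments.
Unset Strict Implicit.
Unset Printing Implicit Defensive.

(* A self-similar group (G,X): a group G (possibly infinite, so given by its
   operations and axioms) with a faithful length-preserving action on X^*
   such that for each g, x there is a unique g|_x with
   g.(x a) = (g.x)(g|_x . a). *)
Record SSGroup (X : finType) := {
  ssg_car :> Type;
  gmul : ssg_car -> ssg_car -> ssg_car;
  gone : ssg_car;
  ginv : ssg_car -> ssg_car;
  gmulA : forall a b c, gmul a (gmul b c) = gmul (gmul a b) c;
  gmul1 : forall a, gmul gone a = a;
  gmulV : forall a, gmul (ginv a) a = gone;
  act : ssg_car -> seq X -> seq X;
  act_one : forall w, act gone w = w;
  act_mul : forall g h w, act (gmul g h) w = act g (act h w);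
  act_size : forall g w, size (act g w) = size w;
  act_faithful : forall g h, (forall w, act g w = act h w) -> g = h;
  res : ssg_car -> X -> ssg_car;
  act_res : forall g x w, act g (x :: w) = act g [:: x] ++ act (res g x) w;
  res_unique : forall g x h,
    (forall w, act g (x :: w) = act g [:: x] ++ act h w) -> h = res g x
}.

Definition Omega (X : Type) := nat -> X.

Section SS.
Variable X : finType.

Definition cyl (a : seq X) : Omega X -> Prop :=
  fun xi => forall i, i < size a -> xi i = nth (xi i) a i.

Definition ocat (a : seq X) (xi : Omega X) : Omega X :=
  fun n => if n < size a then nth (xi 0) a n else xi (n - size a).

Definition oshift (xi : Omega X) (k : nat) : Omega X := fun n => xi (n + k).

Definition oopen (U : Omega X -> Prop) : Prop :=
  forall xi, U xi -> exists n, forall eta, (forall i, i < n -> eta i = xi i) -> U eta.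

Definition clopen (U : Omega X -> Prop) : Prop :=
  oopen U /\ oopen (fun xi => ~ U xi).

Variable G : SSGroup X.

Fixpoint resw (g : G) (w : seq X) : G :=
  match w with [::] => g | x :: w' => resw (res g x) w' end.

Definition act1 (g : G) (x : X) : X := head x (act g [:: x]).

Definition omega_act (g : G) (xi : Omega X) : Omega X :=
  fun n => act1 (resw g (mkseq xi n)) (xi n).

(* non-zero elements (alpha, g, beta) of S_{G,X} *)
Record Tri := mkTri { ta : seq X; tg : G; tb : seq X }.

(* product in S_{G,X}; None stands for 0 *)
Definition Smul (s t : Tri) : option Tri :=
  let: mkTri a g b := s in
  let: mkTri c h n := t in
  if prefix b c then
    let c' := drop (size b) c in
    Some (mkTri (a ++ act g c') (gmul (resw g c') h) n)
  else if prefix c b then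
    let b' := drop (size c) b in
    Some (mkTri a (gmul g (ginv (resw (ginv h) b'))) (n ++ act (ginv h) b'))
  else None.

Definition idem (d : seq X) : Tri := mkTri d (@gone _ G) d.

Definition S_eq (s : Tri) : Prop := size (ta s) = size (tb s).

(* (s, xi) represents the germ [s, xi] of the tight groupoid *)
Definition germ_rep (s : Tri) (xi : Omega X) : Prop := S_eq s /\ cyl (tb s) xi.

Definition germ_eq (s t : Tri) (xi : Omega X) : Prop :=
  exists d, cyl d xi /\ Smul s (idem d) = Smul t (idem d).

Definition grange (s : Tri) (xi : Omega X) : Omega X :=
  ocat (ta s) (omega_act (tg s) (oshift xi (size (tb s)))).

(* subsets of the groupoid, as germ-invariant predicates on representatives *)
Definition gwf (B : Tri -> Omega X -> Prop) : Prop :=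
  (forall s xi, B s xi -> germ_rep s xi) /\
  (forall s t xi, B s xi -> germ_rep t xi -> germ_eq s t xi -> B t xi).

(* basic open sets {[s,y] : y in U}, U open in the domain C(b) of s *)
Definition basic_ok (s : Tri) (U : Omega X -> Prop) : Prop :=
  S_eq s /\ oopen U /\ (forall y, U y -> cyl (tb s) y).

Definition gopen (B : Tri -> Omega X -> Prop) : Prop :=
  forall s xi, B s xi ->
    exists U, basic_ok s U /\ U xi /\ (forall y, U y -> B s y).

Definition gcompact (B : Tri -> Omega X -> Prop) : Prop :=
  forall (I : Type) (bs : I -> Tri) (Us : I -> Omega X -> Prop),
    (forall i, basic_ok (bs i) (Us i)) ->
    (forall s xi, B s xi -> exists i, Us i xi /\ germ_eq (bs i) s xi) ->
    exists l : list I, forall s xi, B s xi ->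
      exists i, List.In i l /\ Us i xi /\ germ_eq (bs i) s xi.

Definition gbisection (B : Tri -> Omega X -> Prop) : Prop :=
  forall s t xi eta, B s xi -> B t eta ->
    ((forall n, xi n = eta n) -> germ_eq s t xi) /\
    ((forall n, grange s xi n = grange t eta n) ->
       (forall n, xi n = eta n) /\ germ_eq s t xi).

(* elements of G_tight(S^=_{G,X})^a *)
Definition cob (B : Tri -> Omega X -> Prop) : Prop :=
  gwf B /\ gopen B /\ gcompact B /\ gbisection B.

(* s^* s and s s^* as clopen subsets of the unit space X^omega *)
Definition gdom (B : Tri -> Omega X -> Prop) : Omega X -> Prop :=
  fun xi => exists s, B s xi.
Definition gran (B : Tri -> Omega X -> Prop) : Omega X -> Prop :=
  fun z => exists s xi, B s xi /\ forall n, grange s xi n = z n.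

(* normalized invariant mean on E(G_tight(S^=)^a) = clopen subsets of X^omega *)
Definition inv_mean (mu : (Omega X -> Prop) -> R) : Prop :=
  (forall A, clopen A -> Rle 0 (mu A)) /\
  mu (fun _ => True) = 1%R /\
  (forall B, cob B -> mu (gdom B) = mu (gran B)) /\
  (forall A B, clopen A -> clopen B -> (forall xi, ~ (A xi /\ B xi)) ->
     mu (fun xi => A xi \/ B xi) = Rplus (mu A) (mu B)).

End SS.

From HB Require Import structures.
From mathcomp Require Import all_boot.
From Stdlib Require Import Reals Lra.
From Stdlib Require Import ClassicalEpsilon.
From mathcomp Require Import zify boolp.

Set Implicit Arguments.
Unset Strict Implicit.
Unset Printing Implicit Defensive.

(* An invariant mean gives equal mass to cylinders of equal length, because the germs
   of (b,1,a) form a compact open bisection from C(a) onto C(b).  Splitting C(w) into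
   the |X| cylinders C(wx) then forces mu(C(w)) = |X|^-|w|, and a clopen set is a
   finite disjoint union of cylinders of one length, whence uniqueness.
   Conversely let mu(A) = #{w in X^n : C(w) is inside A} / |X|^n, for any n at which
   A is determined.  By compactness a compact open bisection B is, at a uniform level
   n, given on each length-n cylinder of its domain by the germs of a single
   (a,g,b) with |a| = |b|; these carry the length-n cylinders of dom B bijectively
   onto length-n cylinders of ran B, so mu(dom B) = mu(ran B). *)

Section GroupAction.
Variables (X : finType) (G : SSGroup X).
Implicit Types (g : G) (u v w : seq X).

Lemma gmulgV g : gmul g (ginv g) = gone G.
Proof.
have idem1 b : gmul b b = b -> b = gone G.
  by move=> hb; rewrite -(gmul1 b) -(gmulV b) -gmulA hb.
by apply: idem1; rewrite -gmulA (gmulA (ginv g) g) gmulV gmul1.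
Qed.

Lemma gmulg1 g : gmul g (gone G) = g.
Proof. by rewrite -(gmulV g) gmulA gmulgV gmul1. Qed.

Lemma ginv1 : ginv (gone G) = gone G.
Proof. by rewrite -{2}(gmulV (gone G)) gmulg1. Qed.

Lemma act_nil g : act g [::] = [::].
Proof. by apply/size0nil; rewrite act_size. Qed.

Lemma act_seq1 g x : act g [:: x] = [:: act1 g x].
Proof. by rewrite /act1; have := act_size g [:: x]; case: (act g [:: x]) => [|? []]. Qed.

Lemma act_cat g u v : act g (u ++ v) = act g u ++ act (resw g u) v.
Proof.
elim: u g => [|x u IH] g /=; first by rewrite act_nil.
by rewrite act_res IH [act g (x :: u)]act_res catA.
Qed.

Lemma resw_cat g u v : resw (resw g u) v = resw g (u ++ v).
Proof. by elim: u g => [|x u IH] g //=. Qed.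

Lemma act_rcons g w x : act g (rcons w x) = rcons (act g w) (act1 (resw g w) x).
Proof. by rewrite -!cats1 act_cat act_seq1. Qed.

Lemma actK g w : act (ginv g) (act g w) = w.
Proof. by rewrite -act_mul gmulV act_one. Qed.

Lemma resw1 w : resw (gone G) w = gone G.
Proof.
have res1 x : res (gone G) x = gone G.
  by symmetry; apply: res_unique => v; rewrite !act_one.
by elim: w => [|x w IH] //=; rewrite res1.
Qed.

End GroupAction.

Section InfiniteWords.
Variable X : finType.
Implicit Types (u v w : seq X) (xi eta z : Omega X).

Definition agree n xi eta := forall i, i < n -> xi i = eta i.

Lemma agreeE n xi eta : agree n xi eta <-> mkseq xi n = mkseq eta n.
Proof.
split=> [h | h i hi].
  by apply: (@eq_from_nth _ (xi 0)); rewrite !size_mkseq // => i hi; rewrite !nth_mkseq ?h.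
by have := f_equal (nth (xi 0) ^~ i) h; rewrite !nth_mkseq.
Qed.

Lemma cylE w xi : cyl w xi <-> mkseq xi (size w) = w.
Proof.
split=> [h | h i hi].
  apply: (@eq_from_nth _ (xi 0)); rewrite size_mkseq // => i hi.
  by rewrite nth_mkseq // h // (set_nth_default (xi 0)).
by have := f_equal (nth (xi i) ^~ i) h; rewrite nth_mkseq // => <-.
Qed.

Lemma cyl_mkseq n xi eta : cyl (mkseq xi n) eta <-> agree n eta xi.
Proof. by rewrite cylE size_mkseq agreeE. Qed.

Lemma cyl_mkseq_self n xi : cyl (mkseq xi n) xi.
Proof. exact/cyl_mkseq. Qed.

Lemma cyl_inj u v z : size u = size v -> cyl u z -> cyl v z -> u = v.
Proof. by move=> huv /cylE <- /cylE <-; rewrite huv. Qed.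

Lemma cyl_agree w xi eta : cyl w xi -> agree (size w) xi eta -> cyl w eta.
Proof. by move=> /cylE hw /agreeE he; apply/cylE; rewrite -he. Qed.

Lemma cyl_prefix u v xi : cyl u xi -> cyl v xi -> size u <= size v -> prefix u v.
Proof.
move=> /cylE hu /cylE hv huv; rewrite prefixE -hv /mkseq -map_take take_iota.
by rewrite (minn_idPl huv) -{2}hu.
Qed.

Lemma cyl_comparable u v xi : cyl u xi -> cyl v xi -> prefix u v \/ prefix v u.
Proof.
move=> hu hv; case: (leqP (size u) (size v)) => huv.
  by left; apply: cyl_prefix hu hv huv.
by right; apply: cyl_prefix hv hu (ltnW huv).
Qed.

Lemma cyl_catl u v xi : cyl (u ++ v) xi -> cyl u xi.
Proof.
move=> h i hi; rewrite h ?size_cat ?(leq_trans hi (leq_addr _ _)) //.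
by rewrite nth_cat hi (set_nth_default (xi i)).
Qed.

Lemma prefix_cat_drop u v : prefix u v -> u ++ drop (size u) v = v.
Proof. by case/prefixP=> r ->; rewrite drop_size_cat. Qed.

Lemma cyl_prefixN u v xi : cyl u xi -> cyl v xi -> ~~ prefix u v -> prefix v u.
Proof. by move=> hu hv /negbTE nuv; case: (cyl_comparable hu hv); rewrite ?nuv. Qed.

Lemma agree_cyl w xi eta : cyl w xi -> cyl w eta -> agree (size w) xi eta.
Proof. by move=> /cylE hxi /cylE heta; apply/agreeE; rewrite hxi heta. Qed.

Lemma cyl_prefixW u v xi : prefix u v -> cyl v xi -> cyl u xi.
Proof. by case/prefixP=> r ->; apply: cyl_catl. Qed.

Lemma cyl_shift u v xi : cyl (u ++ v) xi -> cyl v (oshift xi (size u)).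
Proof.
move=> h i hi; rewrite /oshift h ?size_cat; last by lia.
by rewrite nth_cat ltnNge leq_addl /= addnK (set_nth_default (xi (i + size u))).
Qed.

Lemma cyl_ocat u v eta : cyl v eta -> cyl (u ++ v) (ocat u eta).
Proof.
move=> h i; rewrite /ocat size_cat nth_cat => hi.
case: ltnP => hiu; first exact: set_nth_default.
by rewrite h ?(set_nth_default (eta 0)) //; lia.
Qed.

Lemma cyl_ocat_self u eta : cyl u (ocat u eta).
Proof. by have := @cyl_ocat u [::] eta; rewrite cats0; apply. Qed.

Lemma mkseq_ocat u eta k : mkseq (ocat u eta) (size u + k) = u ++ mkseq eta k.
Proof.
apply: (@eq_from_nth _ (eta 0)); first by rewrite size_mkseq size_cat size_mkseq.
rewrite size_mkseq => i hi; rewrite nth_mkseq // nth_cat /ocat.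
by case: ltnP => // hiu; rewrite nth_mkseq //; lia.
Qed.

Lemma ocat_shift u xi : cyl u xi -> ocat u (oshift xi (size u)) = xi.
Proof.
move=> h; apply: funext => n; rewrite /ocat /oshift.
case: ltnP => hn; last by rewrite subnK.
by symmetry; rewrite h //; apply: set_nth_default.
Qed.

Lemma shift_ocat u eta : oshift (ocat u eta) (size u) = eta.
Proof. by apply: funext => n; rewrite /ocat /oshift ltnNge leq_addl /= addnK. Qed.

Lemma ocat_cat u v eta : ocat u (ocat v eta) = ocat (u ++ v) eta.
Proof.
apply: funext => n; rewrite /ocat size_cat nth_cat.
case: (ltnP n (size u)) => h1; case: (ltnP n (size u + size v)) => h2;
  case: (ltnP (n - size u) (size v)) => h3 //; try lia;
  by [apply: set_nth_default | rewrite subnDA].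
Qed.

Lemma shift_cat u v xi : cyl (u ++ v) xi ->
  oshift xi (size u) = ocat v (oshift xi (size u + size v)).
Proof.
move=> /cyl_shift/ocat_shift <-; congr ocat.
by apply: funext => n; rewrite /oshift; congr xi; lia.
Qed.

Lemma eq_omega_mkseq c (f h : Omega X) :
  (forall k, mkseq f (c + k) = mkseq h (c + k)) -> f = h.
Proof.
move=> H; apply: funext => n; have := f_equal (nth (f 0) ^~ n) (H n.+1).
by rewrite !nth_mkseq // addnS ltnS leq_addl.
Qed.

End InfiniteWords.

Section Words.
Variable X : finType.

Fixpoint words k : seq (seq X) :=
  if k is k'.+1 then [seq rcons w x | w <- words k', x <- enum X] else [:: [::]].

Lemma mem_words k w : (w \in words k) = (size w == k).
Proof.
elim: k w => [|k IH] w /=; first by rewrite mem_seq1; case: w.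
apply/allpairsP/idP => [[[w' x] /= [hw' _ ->]] | ].
  by rewrite size_rcons eqSS -IH.
case/lastP: w => [|w' x] //; rewrite size_rcons eqSS => hw'.
by exists (w', x); rewrite /= IH mem_enum.
Qed.

Lemma uniq_words k : uniq (words k).
Proof.
elim: k => [|k IH] //=; apply: allpairs_uniq => //; first exact: enum_uniq.
by move=> [w x] [w' x'] _ _ /= /rcons_inj [-> ->].
Qed.

Lemma count_words_rcons (p : pred (seq X)) (q : pred (seq X)) k :
  (forall w x, size w = k -> p (rcons w x) = q w) ->
  count p (words k.+1) = #|X| * count q (words k).
Proof.
move=> hpq; have : all (fun w => size w == k) (words k).
  by apply/allP => w; rewrite mem_words.
rewrite /= cardE; elim: (words k) => [|w L IH] /=; first by rewrite muln0.
move=> /andP [/eqP hw /IH {}IH]; rewrite count_cat IH count_map.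
rewrite (@eq_count _ _ (fun _ => q w)) => [|x]; last exact: hpq.
by case: (q w); rewrite ?count_pred0 ?count_predT /=; lia.
Qed.

End Words.

Lemma In_map_mem (T : eqType) (U : Type) (f : T -> U) s x :
  x \in s -> List.In (f x) (map f s).
Proof. by elim: s => //= y s IH; rewrite in_cons => /orP [/eqP ->|/IH]; [left|right]. Qed.

Section Compactness.
Variables (X : finType) (x0 : X).
Implicit Types (u v w : seq X) (xi eta : Omega X) (A : Omega X -> Prop).

Section Fan.
Variable bar : seq X -> Prop.
Hypothesis bar_cat : forall w v, bar w -> bar (w ++ v).

Definition unbarred w := forall m, exists2 v, size v = m & ~ bar (w ++ v).

Lemma bar_size w m m' : m <= m' -> (forall v, size v = m -> bar (w ++ v)) ->
  forall v, size v = m' -> bar (w ++ v).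
Proof.
move=> hm H v hv; rewrite -(cat_take_drop m v) catA; apply/bar_cat/H.
by rewrite size_takel // hv.
Qed.

(* König's lemma: X is finite, so one of the finitely many extensions stays unbarred. *)
Lemma unbarred_rcons w : unbarred w -> exists x, unbarred (rcons w x).
Proof.
move=> hw; apply: NNPP => hn.
have hx x : exists m, forall v, size v = m -> bar (rcons w x ++ v).
  apply: NNPP => h; apply: hn; exists x => m; apply: NNPP => h2.
  apply: h; exists m => v hv; apply: NNPP => h3; apply: h2; by exists v.
have [M HM] : exists M, forall x, x \in enum X -> forall v, size v = M -> bar (rcons w x ++ v).
  elim: (enum X) => [|x s [M IH]]; first by exists 0.
  have [m Hm] := hx x; exists (maxn m M) => y; rewrite in_cons => /orP [/eqP -> | hy].
    exact: bar_size (leq_maxl _ _) Hm.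
  exact: bar_size (leq_maxr _ _) (IH y hy).
have [[|y v] // [hv] hg] := hw M.+1.
by apply: hg; rewrite -cat_rcons; apply: HM; rewrite ?mem_enum.
Qed.

Lemma fan_theorem : (forall xi, exists n, bar (mkseq xi n)) ->
  exists N, forall w, size w = N -> bar w.
Proof.
move=> hbar; apply: NNPP => hN.
pose next w := epsilon (inhabits x0) (fun x => unbarred (rcons w x)).
pose path k := iter k (fun w => rcons w (next w)) [::].
have unbarred_path k : unbarred (path k).
  elim: k => [|k IH] /=.
    move=> m; apply: NNPP => h; apply: hN; exists m => w hw; apply: NNPP => hg.
    by apply: h; exists w.
  exact: epsilon_spec (unbarred_rcons IH).
have size_path k : size (path k) = k by elim: k => //= k IH; rewrite size_rcons IH.
pose xi n := nth x0 (path n.+1) n.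
have mkseq_xi k : mkseq xi k = path k.
  elim: k => // k IH; rewrite mkseqS IH /xi /= nth_rcons size_path ltnn eqxx.
  by rewrite -/(path k).
have [n hn] := hbar xi; have [v /size0nil -> ] := unbarred_path n 0.
by rewrite cats0 -mkseq_xi.
Qed.

End Fan.

Definition determined A n := forall xi eta, agree n xi eta -> (A xi <-> A eta).

Lemma determinedW A n m : n <= m -> determined A n -> determined A m.
Proof. by move=> hnm h xi eta he; apply: h => i hi; apply/he/(leq_trans hi). Qed.

Lemma determined_cyl w : determined (cyl w) (size w).
Proof. by move=> xi eta he; split=> h; apply: (cyl_agree h) => i hi; rewrite he. Qed.

Lemma determined_clopen A n : determined A n -> clopen A.
Proof.
move=> h; split=> xi hxi; exists n => eta he.
- by apply/(h xi eta) => // i hi; rewrite he.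
- by move=> hA; apply: hxi; apply/(h xi eta) => // i hi; rewrite he.
Qed.

Lemma cyl_open w : oopen (cyl w).
Proof. by case: (determined_clopen (@determined_cyl w)). Qed.

Lemma clopen_determined A : clopen A -> exists n, determined A n.
Proof.
move=> [hA hnA].
pose bar w := (forall y, cyl w y -> A y) \/ (forall y, cyl w y -> ~ A y).
have [N HN] : exists N, forall w, size w = N -> bar w.
  apply: fan_theorem.
  - by move=> w v [h|h]; [left|right] => y /cyl_catl; apply: h.
  - move=> xi; have [ha|ha] := pselect (A xi).
    + by have [n hn] := hA xi ha; exists n; left => y /cyl_mkseq; apply: hn.
    + by have [n hn] := hnA xi ha; exists n; right => y /cyl_mkseq; apply: hn.
exists N => xi eta he.
have hxi := @cyl_mkseq_self _ N xi.
have heta : cyl (mkseq xi N) eta by apply/cyl_mkseq => i hi; rewrite he.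
case: (HN (mkseq xi N) (size_mkseq _ _)) => h.
- by split=> _; [apply: h heta | apply: h hxi].
- by split=> H; [case: (h xi hxi H) | case: (h eta heta H)].
Qed.

Lemma cyl_compact (a : seq X) (I : Type) (V : I -> Omega X -> Prop) :
  (forall i, oopen (V i)) -> (forall xi, cyl a xi -> exists i, V i xi) ->
  exists l : list I, forall xi, cyl a xi -> exists i, List.In i l /\ V i xi.
Proof.
move=> hV hcov.
pose bar w := (forall y, cyl w y -> ~ cyl a y) \/ exists i, forall y, cyl w y -> V i y.
have [N HN] : exists N, forall w, size w = N -> bar w.
  apply: fan_theorem.
  - by move=> w v [h|[i h]]; [left|right; exists i] => y /cyl_catl; apply: h.
  - move=> xi; have [ha|ha] := pselect (cyl a xi).
    + have [i hi] := hcov xi ha; have [n hn] := hV i xi hi.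
      by exists n; right; exists i => y /cyl_mkseq; apply: hn.
    + exists (size a); left => y hy hya; apply: ha.
      by rewrite -(cyl_inj _ hy hya) ?size_mkseq //; apply: cyl_mkseq_self.
have [i0 _] := hcov (ocat a (fun _ => x0)) (@cyl_ocat_self _ a _).
pose pick w := epsilon (inhabits i0) (fun i => forall y, cyl w y -> V i y).
exists (map pick (words X N)) => xi hxi.
have hw : mkseq xi N \in words X N by rewrite mem_words size_mkseq.
exists (pick (mkseq xi N)); split; first exact: In_map_mem.
have [h|hi] := HN (mkseq xi N) (size_mkseq _ _); first by case: (h xi (@cyl_mkseq_self _ N xi)).
by apply: (epsilon_spec (inhabits i0) _ hi); apply: cyl_mkseq_self.
Qed.

End Compactness.

Section Germs.
Variables (X : finType) (G : SSGroup X).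
Implicit Types (g : G) (s t : Tri G) (u v w d : seq X) (xi eta z : Omega X).

Lemma omega_act_mkseq g xi n : mkseq (omega_act g xi) n = act g (mkseq xi n).
Proof.
elim: n => [|n IH]; first by rewrite act_nil.
by rewrite !mkseqS IH act_rcons.
Qed.

Lemma omega_act1 xi : omega_act (gone G) xi = xi.
Proof. by apply: (@eq_omega_mkseq _ 0) => k; rewrite omega_act_mkseq act_one. Qed.

Lemma omega_actM g h xi : omega_act (gmul g h) xi = omega_act g (omega_act h xi).
Proof. by apply: (@eq_omega_mkseq _ 0) => k; rewrite !omega_act_mkseq act_mul. Qed.

Lemma omega_actK g xi : omega_act (ginv g) (omega_act g xi) = xi.
Proof. by rewrite -omega_actM gmulV omega_act1. Qed.

Lemma omega_actVK g xi : omega_act g (omega_act (ginv g) xi) = xi.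
Proof. by rewrite -omega_actM gmulgV omega_act1. Qed.

Lemma omega_act_ocat g u eta :
  omega_act g (ocat u eta) = ocat (act g u) (omega_act (resw g u) eta).
Proof.
apply: (@eq_omega_mkseq _ (size u)) => k.
rewrite omega_act_mkseq mkseq_ocat act_cat -omega_act_mkseq.
by rewrite -(act_size g u) mkseq_ocat.
Qed.

Lemma omega_act_cyl g u eta : cyl u eta -> cyl (act g u) (omega_act g eta).
Proof. by move=> /cylE h; apply/cylE; rewrite act_size omega_act_mkseq h. Qed.

(* [restr s d] is the product [s (d,1,d)] when [tb s] is a prefix of [d]. *)
Definition restr s d : Tri G :=
  let r := drop (size (tb s)) d in mkTri (ta s ++ act (tg s) r) (resw (tg s) r) d.

Lemma restr_tb s : restr s (tb s) = s.
Proof. by case: s => a g b; rewrite /restr /= drop_size act_nil cats0. Qed.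

Lemma restr_cat s d v : prefix (tb s) d -> restr s (d ++ v) = restr (restr s d) (d ++ v).
Proof.
case/prefixP=> r ->; rewrite /restr /= [drop (size (_ ++ r)) _]drop_size_cat //.
by rewrite -catA !drop_size_cat // act_cat catA resw_cat.
Qed.

Lemma Smul_idem_restr s d : prefix (tb s) d -> Smul s (idem G d) = Some (restr s d).
Proof. by case: s => a g b /= hbd; rewrite /Smul /idem hbd gmulg1. Qed.

Lemma Smul_idem_prefix s d : prefix d (tb s) -> Smul s (idem G d) = Some s.
Proof.
move=> hdb; have [hbd | nbd] := boolP (prefix (tb s) d).
  have -> : d = tb s.
    by move: hdb; rewrite prefixE take_oversize ?(size_prefix hbd) // => /eqP.
  by rewrite Smul_idem_restr ?restr_tb ?prefix_refl.
case: s hdb nbd => a g b /= hdb nbd; rewrite /Smul /idem (negbTE nbd) hdb /=.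
by rewrite ginv1 resw1 ginv1 gmulg1 act_one prefix_cat_drop.
Qed.

Definition germ_eq_at s t d := [/\ prefix (tb s) d, prefix (tb t) d & restr s d = restr t d].

Lemma germ_eq_at_cyl s t d xi :
  germ_eq_at s t d -> cyl d xi -> [/\ germ_eq s t xi, cyl (tb s) xi & cyl (tb t) xi].
Proof.
move=> [hs ht e] hd; split; [|exact: cyl_prefixW hs hd|exact: cyl_prefixW ht hd].
by exists d; split; rewrite // !Smul_idem_restr // e.
Qed.

Lemma germ_eq_at_cat s t d v : germ_eq_at s t d -> germ_eq_at s t (d ++ v).
Proof.
by move=> [hs ht e]; split; rewrite ?prefix_catl // (restr_cat _ hs) (restr_cat _ ht) e.
Qed.

Lemma germ_eq_at_trans s t r d : germ_eq_at s t d -> germ_eq_at t r d -> germ_eq_at s r d.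
Proof. by move=> [hs _ e1] [_ hr e2]; split; rewrite // e1. Qed.

Lemma germ_eq_witness s t xi : germ_rep s xi -> germ_rep t xi -> germ_eq s t xi ->
  exists2 d, cyl d xi & germ_eq_at s t d.
Proof.
move=> [_ hs] [_ ht] [d [hd e]].
have [hsd | nsd] := boolP (prefix (tb s) d); have [htd | ntd] := boolP (prefix (tb t) d).
- by move: e; rewrite !Smul_idem_restr // => /Some_inj e; exists d.
- move: e; rewrite Smul_idem_restr // Smul_idem_prefix ?(cyl_prefixN ht hd) //.
  by move=> /Some_inj/(f_equal (@tb _ _)) /= edt; move: ntd; rewrite -edt prefix_refl.
- move: e; rewrite Smul_idem_prefix ?(cyl_prefixN hs hd) // Smul_idem_restr //.
  by move=> /Some_inj/(f_equal (@tb _ _)) /= eds; move: nsd; rewrite eds prefix_refl.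
- move: e; rewrite !Smul_idem_prefix ?(cyl_prefixN hs hd) ?(cyl_prefixN ht hd) // => /Some_inj <-.
  by exists (tb s) => //; split; rewrite ?prefix_refl.
Qed.

Lemma germ_eq_refl s xi : germ_eq s s xi.
Proof. by exists [::]. Qed.

Lemma germ_eq_sym s t xi : germ_eq s t xi -> germ_eq t s xi.
Proof. by move=> [d [hd e]]; exists d. Qed.

Lemma germ_eq_trans s t r xi : germ_rep s xi -> germ_rep t xi -> germ_rep r xi ->
  germ_eq s t xi -> germ_eq t r xi -> germ_eq s r xi.
Proof.
move=> hs ht hr /(germ_eq_witness hs ht) [d1 hd1 e1] /(germ_eq_witness ht hr) [d2 hd2 e2].
case: (cyl_comparable hd1 hd2) => /prefix_cat_drop e.
- have e1' := germ_eq_at_cat (drop (size d1) d2) e1; rewrite e in e1'.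
  by have [] := germ_eq_at_cyl (germ_eq_at_trans e1' e2) hd2.
- have e2' := germ_eq_at_cat (drop (size d2) d1) e2; rewrite e in e2'.
  by have [] := germ_eq_at_cyl (germ_eq_at_trans e1 e2') hd1.
Qed.

Lemma grange_restr s d xi : prefix (tb s) d -> cyl d xi -> grange (restr s d) xi = grange s xi.
Proof.
move=> /prefix_cat_drop hd hxi; rewrite -hd in hxi.
by rewrite /grange /= (shift_cat hxi) omega_act_ocat ocat_cat -size_cat hd.
Qed.

Lemma germ_grange s t xi : germ_rep s xi -> germ_rep t xi -> germ_eq s t xi ->
  grange s xi = grange t xi.
Proof.
move=> hs ht /(germ_eq_witness hs ht) [d hd [hsd htd e]].
by rewrite -(grange_restr hsd hd) -(grange_restr htd hd) e.
Qed.

Lemma grange_cyl s d xi : prefix (tb s) d -> cyl d xi -> cyl (ta (restr s d)) (grange s xi).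
Proof. by move=> hsd hd; rewrite -(grange_restr hsd hd); apply: cyl_ocat_self. Qed.

Lemma grange_surj s d z : prefix (tb s) d -> cyl (ta (restr s d)) z ->
  exists2 xi, cyl d xi & grange s xi = z.
Proof.
case: s => a g b /prefix_cat_drop hd; rewrite /restr /= => hz.
exists (ocat b (omega_act (ginv g) (oshift z (size a)))).
  rewrite -hd; apply: cyl_ocat; rewrite -[X in cyl X _](actK g).
  exact/omega_act_cyl/cyl_shift.
by rewrite /grange /= shift_ocat omega_actVK (ocat_shift (cyl_catl hz)).
Qed.

Lemma grange_inj s xi eta : cyl (tb s) xi -> cyl (tb s) eta ->
  grange s xi = grange s eta -> xi = eta.
Proof.
move=> hxi heta /(f_equal (fun z => oshift z (size (ta s)))); rewrite !shift_ocat.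
move=> /(f_equal (omega_act (ginv (tg s)))); rewrite !omega_actK => e.
by rewrite -(ocat_shift hxi) e ocat_shift.
Qed.

Definition germ_set s : Tri G -> Omega X -> Prop :=
  fun t xi => [/\ germ_rep t xi, cyl (tb s) xi & germ_eq s t xi].

Section GermSet.
Variables (x0 : X) (s : Tri G).
Hypothesis hs : S_eq s.

Lemma germ_set_rep xi : cyl (tb s) xi -> germ_rep s xi.
Proof. by split. Qed.

Lemma germ_set_self xi : cyl (tb s) xi -> germ_set s s xi.
Proof. by move=> h; split; [apply: germ_set_rep | | apply: germ_eq_refl]. Qed.

Lemma germ_set_eq t r xi : germ_set s t xi -> germ_set s r xi -> germ_eq t r xi.
Proof.
move=> [ht hxi e1] [hr _ e2].
exact: germ_eq_trans ht (germ_set_rep hxi) hr (germ_eq_sym e1) e2.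
Qed.

Lemma germ_set_grange t xi : germ_set s t xi -> grange t xi = grange s xi.
Proof. by move=> [ht hxi e]; symmetry; apply: germ_grange. Qed.

Lemma germ_set_wf : gwf (germ_set s).
Proof.
split=> [t xi [] // | t r xi [ht hxi e] hr e']; split=> //.
exact: germ_eq_trans (germ_set_rep hxi) ht hr e e'.
Qed.

Lemma germ_set_open : gopen (germ_set s).
Proof.
move=> t xi [ht hxi e]; have [d hd [hsd htd e']] := germ_eq_witness (germ_set_rep hxi) ht e.
exists (cyl d); split; first by split; [case: ht | split=> [|y]; [apply: cyl_open | apply: cyl_prefixW]].
split=> // y hy; have [e'' hsy hty] := germ_eq_at_cyl (And3 hsd htd e') hy.
by split=> //; split=> //; case: ht.
Qed.

Lemma germ_set_compact : gcompact (germ_set s).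
Proof.
move=> I bs Us hbs hcov; pose V i y := Us i y /\ germ_set s (bs i) y.
have V_open i : oopen (V i).
  move=> y [hU [hr hy e]]; have [hSi [hop _]] := hbs i.
  have [d hd [hsd hid e']] := germ_eq_witness (germ_set_rep hy) hr e.
  have [n hn] := hop y hU; exists (maxn n (size d)) => eta he.
  have heta : cyl d eta.
    by apply: cyl_agree hd _ => j hj; rewrite he // (leq_trans hj (leq_maxr _ _)).
  have [e'' hs' hi'] := germ_eq_at_cyl (And3 hsd hid e') heta.
  by split; [apply: hn => j hj; apply/he/(leq_trans hj (leq_maxl _ _)) | split].
have cover xi : cyl (tb s) xi -> exists i, V i xi.
  move=> hxi; have [i [hU e]] := hcov s xi (germ_set_self hxi); have [hSi [_ hsub]] := hbs i.
  by exists i; split=> //; split; [split; last apply: hsub | | apply: germ_eq_sym].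
have [l hl] := cyl_compact x0 V_open cover.
exists l => t xi ht; have [_ hxi _] := ht; have [i [hi [hU hV]]] := hl xi hxi.
by exists i; split=> //; split=> //; apply: germ_set_eq hV ht.
Qed.

Lemma germ_set_bisection : gbisection (germ_set s).
Proof.
move=> t r xi eta ht hr; split=> [/funext exi | e].
  by rewrite -exi in hr; apply: germ_set_eq ht hr.
have exi : xi = eta.
  have [[_ hxi _] [_ heta _]] := (ht, hr).
  apply: grange_inj hxi heta _.
  by rewrite -(germ_set_grange ht) -(germ_set_grange hr); apply: funext.
by rewrite -exi in hr *; split=> //; apply: germ_set_eq ht hr.
Qed.

Lemma germ_set_cob : cob (germ_set s).
Proof.
split; first exact: germ_set_wf.
by split; [apply: germ_set_open | split; [apply: germ_set_compact | apply: germ_set_bisection]].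
Qed.

Lemma germ_set_dom : gdom (germ_set s) = cyl (tb s).
Proof.
apply: funext => xi; apply: propext; split=> [[t [_ ? _]] // | hxi].
by exists s; apply: germ_set_self.
Qed.

Lemma germ_set_ran : gran (germ_set s) = cyl (ta s).
Proof.
apply: funext => z; apply: propext; split=> [[t [xi [ht /funext <-]]] | hz].
  have [_ hxi _] := ht; rewrite (germ_set_grange ht) -{1}(restr_tb s).
  exact: grange_cyl (prefix_refl _) hxi.
have [|xi hxi e] := @grange_surj s (tb s) z (prefix_refl _); first by rewrite restr_tb.
by exists s, xi; split; [apply: germ_set_self | rewrite e].
Qed.

End GermSet.

End Germs.

Section CountingMean.
Variables (X : finType) (x0 : X).
Implicit Types (u w : seq X) (xi z : Omega X) (A B : Omega X -> Prop).

Local Notation r := (/ INR #|X|)%R.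

Definition cyl_sub w A := forall y, cyl w y -> A y.

Definition count_in A n := count (fun w => `[< cyl_sub w A >]) (words X n).

Definition level A := epsilon (inhabits 0) (determined A).

(* [level A] is some level determining A (junk if A is not clopen); by [mean_level]
   the value of [mean A] does not depend on that choice. *)
Definition mean A : R := (INR (count_in A (level A)) * r ^ level A)%R.

Definition cyls (L : seq (seq X)) z := exists2 w, w \in L & cyl w z.

Definition additive (nu : (Omega X -> Prop) -> R) := forall A B, clopen A -> clopen B ->
  (forall xi, ~ (A xi /\ B xi)) -> nu (fun xi => A xi \/ B xi) = (nu A + nu B)%R.

Lemma cyl_sub_determined A w xi : determined A (size w) -> cyl w xi ->
  cyl_sub w A <-> A xi.
Proof.
move=> hA hxi; split=> [h | hAxi y hy]; first exact: h.
apply/(hA xi y) => // i hi.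
by rewrite (hxi i hi) (hy i hi); apply: set_nth_default.
Qed.

Lemma cyl_sub_rcons A w x : determined A (size w) -> cyl_sub (rcons w x) A <-> cyl_sub w A.
Proof.
move=> hA; have hy := @cyl_ocat_self _ (rcons w x) (fun _ => x).
have hA' : determined A (size (rcons w x)) by apply: determinedW hA; rewrite size_rcons.
have hy' : cyl w (ocat (rcons w x) (fun _ => x)) by move: hy; rewrite -cats1 => /cyl_catl.
by rewrite (cyl_sub_determined hA' hy) (cyl_sub_determined hA hy').
Qed.

Lemma count_in_succ A n : determined A n -> count_in A n.+1 = (#|X| * count_in A n)%N.
Proof.
move=> hA; apply: count_words_rcons => w x hw.
by apply: asbool_equiv_eq; apply: cyl_sub_rcons; rewrite hw.
Qed.

Lemma card_gt0 : (0 < #|X|)%N.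
Proof. by apply/card_gt0P; exists x0. Qed.

Lemma count_in_shift A n k : determined A n ->
  (INR (count_in A (n + k)) * r ^ (n + k) = INR (count_in A n) * r ^ n)%R.
Proof.
move=> hA; elim: k => [|k IH]; first by rewrite addn0.
rewrite addnS count_in_succ; last by apply: determinedW hA; apply: leq_addr.
by rewrite -IH mult_INR /=; field; apply/not_0_INR/eqP; rewrite -lt0n card_gt0.
Qed.

Lemma mean_level A n : determined A n -> mean A = (INR (count_in A n) * r ^ n)%R.
Proof.
move=> hA; have hlev : determined A (level A) by apply: epsilon_spec; exists n.
rewrite /mean -(count_in_shift (maxn n (level A) - level A) hlev).
by rewrite -(count_in_shift (maxn n (level A) - n) hA) !subnKC ?leq_maxl ?leq_maxr.
Qed.

Lemma mean_ge0 A : (0 <= mean A)%R.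
Proof. by apply: Rmult_le_pos; [apply: pos_INR | apply/pow_le/Rlt_le/Rinv_0_lt_compat/lt_0_INR/ltP/card_gt0]. Qed.

Lemma mean_setT : mean (fun _ => True) = 1%R.
Proof.
by rewrite (@mean_level _ 0) // /count_in /= asboolT //= Rmult_1_l.
Qed.

Lemma mean_cyl w : mean (cyl w) = (r ^ size w)%R.
Proof.
rewrite (mean_level (@determined_cyl _ w)) /count_in.
rewrite (@eq_in_count _ _ (pred1 w)) => [|u]; last first.
  rewrite mem_words => /eqP hu /=; apply: asbool_equiv_eqP; first exact: eqP.
  split=> [hsub | -> //]; have hy := @cyl_ocat_self _ u (fun _ => x0).
  by apply: cyl_inj hu hy (hsub _ hy).
by rewrite count_uniq_mem ?uniq_words // mem_words eqxx /= Rmult_1_l.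
Qed.

Lemma determined_or A B n : determined A n -> determined B n ->
  determined (fun xi => A xi \/ B xi) n.
Proof. by move=> hA hB xi eta he; have := hA xi eta he; have := hB xi eta he; tauto. Qed.

Lemma cyl_sub_or A B n w : determined A n -> determined B n ->
  (forall xi, ~ (A xi /\ B xi)) -> w \in words X n ->
  `[< cyl_sub w (fun xi => A xi \/ B xi) >] = `[< cyl_sub w A >] || `[< cyl_sub w B >] /\
  ~~ (`[< cyl_sub w A >] && `[< cyl_sub w B >]).
Proof.
move=> hA hB hAB; rewrite mem_words => /eqP hw; rewrite -hw in hA hB; have hy := @cyl_ocat_self _ w (fun _ => x0).
rewrite (asbool_equiv_eq (cyl_sub_determined (determined_or hA hB) hy)).
rewrite (asbool_equiv_eq (cyl_sub_determined hA hy)) (asbool_equiv_eq (cyl_sub_determined hB hy)).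
by rewrite asbool_or -asbool_and; split=> //; apply/asboolPn/hAB.
Qed.

Lemma mean_additive : additive mean.
Proof.
move=> A B /(clopen_determined x0) [na hA] /(clopen_determined x0) [nb hB] hAB.
pose n := maxn na nb.
have {}hA : determined A n by apply: determinedW hA; apply: leq_maxl.
have {}hB : determined B n by apply: determinedW hB; apply: leq_maxr.
have hsplit := cyl_sub_or hA hB hAB.
rewrite (mean_level (determined_or hA hB)) (mean_level hA) (mean_level hB).
rewrite -Rmult_plus_distr_r -plus_INR plusE; congr (INR _ * _)%R.
rewrite /count_in -count_predUI [X in (_ + X)%N](@eq_in_count _ _ pred0) => [|w /hsplit []].
  by rewrite count_pred0 addn0; apply: eq_in_count => w /hsplit [].
by move=> _ /negbTE.
Qed.

Lemma determined_cyls L m : {in L, forall w, size w = m} -> determined (cyls L) m.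
Proof.
by move=> hL xi eta he; split=> -[w hw hc]; exists w => //; apply: (cyl_agree hc);
  rewrite (hL w hw) => i hi; rewrite he.
Qed.

Lemma cyls_filter_words A n : determined A n -> A = cyls [seq w <- words X n | `[< cyl_sub w A >]].
Proof.
move=> hA; apply: funext => z; apply: propext; split=> [Az | [w]].
  exists (mkseq z n); last exact: cyl_mkseq_self.
  rewrite mem_filter mem_words size_mkseq eqxx andbT; apply/asboolP.
  by apply/(cyl_sub_determined _ (@cyl_mkseq_self _ n z)); rewrite ?size_mkseq.
rewrite mem_filter mem_words => /andP [/asboolP hsub /eqP hw] /hsub //.
Qed.

Lemma additive_set0 nu : additive nu -> nu (fun _ => False) = 0%R.
Proof.
move=> hadd; have c0 : clopen (fun _ : Omega X => False) by apply: (@determined_clopen _ _ 0).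
have := hadd _ _ c0 c0 (fun _ => @proj1 _ _); have -> : (fun _ : Omega X => False \/ False) = (fun _ => False).
  by apply: funext => xi; apply: propext; tauto.
lra.
Qed.

Lemma additive_cyls nu (c : R) m L : additive nu -> uniq L ->
  {in L, forall w, size w = m} -> {in L, forall w, nu (cyl w) = c} ->
  nu (cyls L) = (INR (size L) * c)%R.
Proof.
move=> hadd; elim: L => [|w L IH] /= => [_ _ _ | /andP [wL uL] hsz hc].
  have -> : cyls [::] = (fun _ => False) by apply: funext => z; apply: propext; split=> // -[].
  by rewrite additive_set0 // Rmult_0_l.
have hsz' : {in L, forall u, size u = m} by move=> u hu; apply: hsz; rewrite in_cons hu orbT.
have -> : cyls (w :: L) = (fun z => cyl w z \/ cyls L z).
  apply: funext => z; apply: propext; split=> [[u] | [hz | [u hu hz]]].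
  - by rewrite in_cons => /orP [/eqP -> | hu] hz; [left | right; exists u].
  - by exists w; rewrite ?in_cons ?eqxx.
  - by exists u; rewrite ?in_cons ?hu ?orbT.
rewrite hadd; first last.
- move=> z [hw [u hu hz]]; move: wL; rewrite (cyl_inj _ hw hz) ?hu //.
  by rewrite hsz ?hsz' ?in_cons ?eqxx.
- exact: determined_clopen (determined_cyls hsz').
- exact: determined_clopen (@determined_cyl _ w).
rewrite IH // => [|u hu]; last by apply: hc; rewrite in_cons hu orbT.
by rewrite hc ?in_cons ?eqxx //; case: (size L) => [|k] /=; ring.
Qed.

Lemma additive_determined nu A n : additive nu ->
  (forall w, nu (cyl w) = (r ^ size w)%R) -> determined A n ->
  nu A = (INR (count_in A n) * r ^ n)%R.
Proof.
move=> hadd hcyl hA; rewrite [in LHS](cyls_filter_words hA) /count_in -size_filter.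
apply: additive_cyls => //; first by apply/filter_uniq/uniq_words.
  by move=> w; rewrite mem_filter mem_words => /andP [_ /eqP ->].
by move=> w; rewrite mem_filter mem_words => /andP [_ /eqP <-].
Qed.

End CountingMean.

Section InvariantMeans.
Variables (X : finType) (G : SSGroup X) (x0 : X).

Local Notation r := (/ INR #|X|)%R.

Lemma inv_mean_additive nu : inv_mean G nu -> additive nu.
Proof. by case=> _ [_ [_]]. Qed.

Lemma inv_mean_cyl_eq nu a b : inv_mean G nu -> size a = size b -> nu (cyl a) = nu (cyl b).
Proof.
move=> [_ [_ [hinv _]]] hab; have hs : S_eq (mkTri b (gone G) a) by [].
rewrite -(germ_set_dom hs) -(germ_set_ran hs); exact/hinv/(germ_set_cob x0 hs).
Qed.

Lemma cyl_rcons_cyls w : cyl w = cyls [seq rcons w x | x <- enum X].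
Proof.
apply: funext => z; apply: propext; split=> [hz | [_ /mapP [x _ ->]]].
  exists (rcons w (z (size w))); first by apply: map_f; rewrite mem_enum.
  by apply/cylE; rewrite size_rcons mkseqS (proj1 (cylE w z) hz).
by rewrite -cats1 => /cyl_catl.
Qed.

Lemma inv_mean_cyl nu w : inv_mean G nu -> nu (cyl w) = (r ^ size w)%R.
Proof.
move=> hnu; elim/last_ind: w => [|w x IH].
  have -> : cyl [::] = (fun _ : Omega X => True) by apply: funext => xi; apply: propext.
  by case: hnu => _ [].
pose L := [seq rcons w y | y <- enum X].
have e : nu (cyl w) = (INR #|X| * nu (cyl (rcons w x)))%R.
  rewrite cyl_rcons_cyls -/L cardE -(size_map (rcons w)).
  apply: additive_cyls (inv_mean_additive hnu) _ _ _.
  - by rewrite map_inj_uniq ?enum_uniq //; apply: rcons_injr.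
  - by move=> _ /mapP [y _ ->]; rewrite size_rcons.
  - by move=> _ /mapP [y _ ->]; apply: inv_mean_cyl_eq; rewrite ?size_rcons.
rewrite IH in e; rewrite size_rcons /= e -Rmult_assoc Rinv_l ?Rmult_1_l //.
by apply/not_0_INR/eqP; rewrite -lt0n card_gt0.
Qed.

Section CompactOpenBisection.
Variable B : Tri G -> Omega X -> Prop.
Hypothesis hB : cob B.

Definition local_section w s := [/\ S_eq s, prefix (tb s) w & forall y, cyl w y -> B s y].

Lemma cob_agree s xi : B s xi ->
  exists2 m, size (tb s) <= m & forall y, agree m y xi -> B s y.
Proof.
move=> hsxi; have [[hrep _] [hop _]] := hB; have [_ hxi] := hrep _ _ hsxi.
have [U [[_ [hU _]] [hUxi hUB]]] := hop s xi hsxi; have [m hm] := hU xi hUxi.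
exists (maxn m (size (tb s))) => [|y hy]; first exact: leq_maxr.
by apply/hUB/hm => i hi; apply/hy/(leq_trans hi (leq_maxl _ _)).
Qed.

(* Compactness makes the level m of [cob_agree] uniform over B. *)
Lemma cob_uniform_level : exists n, forall w z, size w = n -> cyl w z -> gdom B z ->
  exists s, local_section w s.
Proof.
have [[hrep _] [_ [hcp _]]] := hB.
pose P (p : Tri G * Omega X * nat) := [/\ B p.1.1 p.1.2, size (tb p.1.1) <= p.2 &
  forall y, agree p.2 y p.1.2 -> B p.1.1 y].
pose I := {p | P p}; pose bs (i : I) := (sval i).1.1; pose len (i : I) := (sval i).2.
pose Us (i : I) y := agree (len i) y (sval i).1.2.
have [l hl] : exists l : list I, forall s xi, B s xi ->
    exists i, List.In i l /\ Us i xi /\ germ_eq (bs i) s xi.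
  apply: hcp.
- move=> i; have [hsxi hm _] := svalP i; have [hS hxi] := hrep _ _ hsxi; split=> //; split.
    by move=> y hy; exists (len i) => eta he j hj; rewrite he ?hy.
  by move=> y hy; apply: cyl_agree hxi _ => j hj; rewrite hy // (leq_trans hj hm).
- move=> s xi hsxi; have [m hm hB'] := cob_agree hsxi.
  by exists (exist P (s, xi, m) (And3 hsxi hm hB')); split; [|apply: germ_eq_refl].
pose maxlen l' := foldr (fun i acc => maxn (len i) acc) 0 l'.
have len_le l' i : List.In i l' -> len i <= maxlen l'.
  elim: l' => [|j l' IH] //= [-> | /IH hi]; first exact: leq_maxl.
  exact: leq_trans hi (leq_maxr _ _).
pose n := maxlen l.
exists n => w z hw hz [s hsz]; have [i [hi [hUz _]]] := hl s z hsz.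
have [hBi hlen hagree] := svalP i; have [hS hbi] := hrep _ _ hBi.
have hlen_n : len i <= size w by rewrite hw; apply: len_le.
have agree_i y : cyl w y -> agree (len i) y (sval i).1.2.
  by move=> hy j hj; rewrite -hUz // (agree_cyl hy hz) // (leq_trans hj hlen_n).
exists (bs i); split=> //; last by move=> y /agree_i /hagree.
apply: (cyl_prefix _ hz (leq_trans hlen hlen_n)).
by apply: cyl_agree hbi _ => j hj; symmetry; apply: agree_i hz _ (leq_trans hj hlen).
Qed.

Section UniformLevel.
Variable n : nat.
Hypothesis hn : forall w z, size w = n -> cyl w z -> gdom B z -> exists s, local_section w s.

Definition meets_dom w := exists2 z, cyl w z & gdom B z.

Definition dom_words := [seq w <- words X n | `[< meets_dom w >]].

Definition section_at w := epsilon (inhabits (idem G [::])) (local_section w).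

Definition ran_word w := ta (restr (section_at w) w).

Lemma mem_dom_words w : w \in dom_words -> size w = n /\ local_section w (section_at w).
Proof.
rewrite mem_filter mem_words => /andP [/asboolP [z hz hBz] /eqP hw]; split=> //.
by apply: epsilon_spec; apply: hn hz hBz.
Qed.

Lemma gdom_cyls : gdom B = cyls dom_words.
Proof.
apply: funext => z; apply: propext; split=> [hz | [w /mem_dom_words [_ [_ _ hBw]] /hBw hBz]].
  exists (mkseq z n); last exact: cyl_mkseq_self.
  rewrite mem_filter mem_words size_mkseq eqxx andbT; apply/asboolP.
  by exists z => //; apply: cyl_mkseq_self.
by exists (section_at w).
Qed.

Lemma gran_cyls : gran B = cyls (map ran_word dom_words).
Proof.
have [[hrep _] [_ [_ hbi]]] := hB.
apply: funext => z; apply: propext; split=> [[s [xi [hsxi /funext <-]]] | [_ /mapP [w hw ->] hz]].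
  have hw : mkseq xi n \in dom_words.
    rewrite mem_filter mem_words size_mkseq eqxx andbT; apply/asboolP.
    by exists xi; [apply: cyl_mkseq_self | exists s].
  have [_ [_ hpre hsec]] := mem_dom_words hw; have hxi := @cyl_mkseq_self _ n xi.
  have hBsec := hsec _ hxi; have [hge _] := hbi _ _ _ _ hsxi hBsec.
  rewrite (germ_grange (hrep _ _ hsxi) (hrep _ _ hBsec) (hge (fun _ => erefl))).
  by exists (ran_word (mkseq xi n)); [apply: map_f | apply: grange_cyl hpre hxi].
have [_ [_ hpre hsec]] := mem_dom_words hw; have [xi hxi e] := grange_surj hpre hz.
by exists (section_at w), xi; split; [apply: hsec | rewrite e].
Qed.

Lemma size_ran_word w : w \in dom_words -> size (ran_word w) = n.
Proof.
move=> /mem_dom_words [hw [hS hpre _]]; rewrite /ran_word /restr /= size_cat act_size size_drop.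
by rewrite hS subnKC ?size_prefix.
Qed.

Lemma ran_word_inj : {in dom_words &, injective ran_word}.
Proof.
have [_ [_ [_ hbi]]] := hB.
move=> w1 w2 hw1 hw2 e; have [hs1 [_ hpre1 hsec1]] := mem_dom_words hw1.
have [hs2 [_ hpre2 hsec2]] := mem_dom_words hw2.
have hz1 := @cyl_ocat_self _ (ran_word w1) (fun _ => x0).
have hz2 : cyl (ran_word w2) (ocat (ran_word w1) (fun _ => x0)) by rewrite -e.
have [xi1 hxi1 e1] := grange_surj hpre1 hz1; have [xi2 hxi2 e2] := grange_surj hpre2 hz2.
have [_ hran] := hbi _ _ _ _ (hsec1 _ hxi1) (hsec2 _ hxi2).
have [exi _] := hran (fun k => congr1 (fun f => f k) (etrans e1 (esym e2))).
by apply: cyl_inj hxi1 _; rewrite ?hs1 ?hs2 // (funext exi).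
Qed.

Lemma mean_gdom_gran : mean (gdom B) = mean (gran B).
Proof.
have mean_cyls (L : seq (seq X)) : uniq L -> {in L, forall w, size w = n} ->
    mean (cyls L) = (INR (size L) * r ^ n)%R.
  move=> hu hL; apply: (additive_cyls (mean_additive x0) hu hL).
  by move=> w /hL <-; apply: mean_cyl.
have dom_uniq : uniq dom_words by apply/filter_uniq/uniq_words.
have dom_size : {in dom_words, forall w, size w = n} by move=> w /mem_dom_words [].
have ran_uniq : uniq (map ran_word dom_words) by rewrite map_inj_in_uniq //; apply: ran_word_inj.
have ran_size : {in map ran_word dom_words, forall w, size w = n}.
  by move=> _ /mapP [w hw ->]; apply: size_ran_word.
by rewrite gdom_cyls gran_cyls !mean_cyls ?size_map.
Qed.

End UniformLevel.

Lemma mean_cob : mean (gdom B) = mean (gran B).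
Proof. by have [n hn] := cob_uniform_level; apply: (mean_gdom_gran hn). Qed.

End CompactOpenBisection.


Lemma inv_mean_mean : inv_mean G (@mean X).
Proof.
split; first by move=> A _; apply: (mean_ge0 x0).
by split; [apply: (mean_setT x0) | split; [move=> B; apply: mean_cob | apply: (mean_additive x0)]].
Qed.

Lemma inv_mean_unique nu A : inv_mean G nu -> clopen A -> nu A = mean A.
Proof.
move=> hnu /(clopen_determined x0) [n hA].
rewrite (mean_level x0 hA); apply: additive_determined hA.
  exact: inv_mean_additive.
by move=> w; apply: inv_mean_cyl.
Qed.

End InvariantMeans.

Theorem mainTheorem17 (X : finType) (G : SSGroup X) (hX : (0 < #|X|)%N) :
  exists mu : (Omega X -> Prop) -> R,
    inv_mean G mu /\
    (forall a : seq X, mu (cyl a) = pow (Rinv (INR #|X|)) (size a)) /\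
    (forall nu : (Omega X -> Prop) -> R, inv_mean G nu ->
       forall A, clopen A -> nu A = mu A).
Proof.
have [x0 _] := card_gt0P hX.
exists (@mean X); split; first exact: inv_mean_mean x0.
split=> [a | nu hnu A hA]; first exact: mean_cyl x0 a.
exact: (inv_mean_unique x0 hnu hA).
Qed.
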